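(* Let $N\ge3$, suppose $\boldsymbol{\mathfrak h}\notin\mathrm{col}(C)$, let $\mathbf p=\mathrm{proj}_{\ker(C)}\boldsymbol{\mathfrak h}$ (orthogonal projection), $\gamma_{\max}=\|\mathbf p\|_\infty^{-1}$, and let $\gamma\in\mathbb{R}$ with $0<|\gamma|\le\gamma_{\max}$. Set $\tilde{\boldsymbol{\mathfrak b}}=\gamma\mathbf p$ and $\boldsymbol\theta=\tfrac12\arccos\tilde{\boldsymbol{\mathfrak b}}$ (entrywise). Then the dephasing code associated with $\boldsymbol\theta$ satisfies $PSP\in\mathbb{R}P$ for all $S\in\mathfrak{S}$, and $PHP=\tfrac{\gamma}{2}\|\mathbf p\|_2^2\,Z_L\not\propto P$. Moreover, if $\ker(C)$ is one-dimensional and $\gamma=\gamma_{\max}$, then $\tilde{\boldsymbol{\mathfrak b}}$ is an optimal solution of the problem: maximize $\boldsymbol{\mathfrak b}\cdot\boldsymbol{\mathfrak h}$ subject to $\|\boldsymbol{\mathfrak b}\|_\infty\le1$, $\boldsymbol{\mathfrak b}\perp\mathrm{col}(C)$.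
   Context: Qubits $1,\dots,N$; $Z_j$, $X_j$ denote the Pauli $Z$, $X$ operators on qubit $j$ of $(\mathbb{C}^2)^{\otimes N}$. For $\mathbf v\in\mathbb{R}^N$, $\mathbf v\cdot\mathbf Z:=\sum_j v_jZ_j$. Dephasing model: $\boldsymbol{\mathfrak h}\in\mathbb{R}^N$, $H=\tfrac12\boldsymbol{\mathfrak h}\cdot\mathbf Z$; $C$ is a real symmetric positive semidefinite $N\times N$ matrix with orthonormal eigenvectors $\mathbf v_1,\dots,\mathbf v_N$ and eigenvalues $\lambda_1,\dots,\lambda_N\ge0$; $L_j=\sqrt{\lambda_j}\,\mathbf v_j\cdot\mathbf Z$; $\mathrm{col}(C),\ker(C)$ are column space and kernel of $C$; the Lindblad span $\mathfrak{S}$ is the real span of $I$, all $L_i$ and all $L_iL_j$. Dephasing code for $\boldsymbol\theta\in\mathbb{R}^N$: $|0_L\rangle=\bigotimes_{j=1}^N(\cos\theta_j|0\rangle+i\sin\theta_j|1\rangle)$, $|1_L\rangle=X^{\otimes N}|0_L\rangle$, $P=|0_L\rangle\langle0_L|+|1_L\rangle\langle1_L|$, $Z_L=|0_L\rangle\langle0_L|-|1_L\rangle\langle1_L|$. *)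

From Stdlib Require Import Reals Lra Lia List Bool Arith.
Open Scope R_scope.

Fixpoint rsum (n : nat) (f : nat -> R) : R :=
  match n with O => 0 | S m => rsum m f + f m end.

Definition rvec := nat -> R.          (* entries j < N are meaningful *)
Definition rmat := nat -> nat -> R.

Definition dot (N : nat) (u v : rvec) : R := rsum N (fun j => u j * v j).
Definition matvec (N : nat) (C : rmat) (x : rvec) : rvec :=
  fun i => rsum N (fun j => C i j * x j).

Definition in_col (N : nat) (C : rmat) (w : rvec) : Prop :=
  exists y : rvec, forall i, (i < N)%nat -> matvec N C y i = w i.
Definition in_ker (N : nat) (C : rmat) (x : rvec) : Prop :=
  forall i, (i < N)%nat -> matvec N C x i = 0.
Definition is_orth_proj_ker (N : nat) (C : rmat) (h p : rvec) : Prop :=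
  in_ker N C p /\ forall w, in_ker N C w -> dot N (fun j => h j - p j) w = 0.
Definition ker_dim1 (N : nat) (C : rmat) : Prop :=
  exists u, in_ker N C u /\ (exists j, (j < N)%nat /\ u j <> 0) /\
    forall w, in_ker N C w -> exists t : R, forall j, (j < N)%nat -> w j = t * u j.

Definition infnorm (N : nat) (p : rvec) : R :=
  fold_right Rmax 0 (map (fun j => Rabs (p j)) (seq 0 N)).
Definition norm2sq (N : nat) (p : rvec) : R := dot N p p.

Definition feasible (N : nat) (C : rmat) (b : rvec) : Prop :=
  infnorm N b <= 1 /\ forall w, in_col N C w -> dot N b w = 0.
Definition optimal (N : nat) (C : rmat) (h b : rvec) : Prop :=
  feasible N C b /\ forall b', feasible N C b' -> dot N b' h <= dot N b h.

Record Cx := mkC { re : R; im : R }.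
Definition RtoC (r : R) : Cx := mkC r 0.
Definition C0 : Cx := mkC 0 0.
Definition C1 : Cx := mkC 1 0.
Definition Cadd (a b : Cx) : Cx := mkC (re a + re b) (im a + im b).
Definition Cmul (a b : Cx) : Cx :=
  mkC (re a * re b - im a * im b) (re a * im b + im a * re b).
Definition Cconj (a : Cx) : Cx := mkC (re a) (- im a).
Fixpoint csum (n : nat) (f : nat -> Cx) : Cx :=
  match n with O => C0 | S m => Cadd (csum m f) (f m) end.
Fixpoint cprod (n : nat) (f : nat -> Cx) : Cx :=
  match n with O => C1 | S m => Cmul (cprod m f) (f m) end.

(* ---------- N-qubit operators on (C^2)^{⊗N} ----------
   Basis |x>, x < 2^N; qubit j is bit j of x (bit 0 = |0>, bit 1 = |1>). *)
Definition Op := nat -> nat -> Cx.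
Definition ket := nat -> Cx.

Definition op_eq (N : nat) (A B : Op) : Prop :=
  forall x y, (x < 2 ^ N)%nat -> (y < 2 ^ N)%nat -> A x y = B x y.
Definition Omul (N : nat) (A B : Op) : Op :=
  fun x y => csum (2 ^ N) (fun k => Cmul (A x k) (B k y)).
Definition Oadd (A B : Op) : Op := fun x y => Cadd (A x y) (B x y).
Definition Oscale (c : Cx) (A : Op) : Op := fun x y => Cmul c (A x y).
Definition Oid : Op := fun x y => if Nat.eqb x y then C1 else C0.
Definition Osum (n : nat) (F : nat -> Op) : Op := fun x y => csum n (fun i => F i x y).
Definition Oapp (N : nat) (A : Op) (psi : ket) : ket :=
  fun x => csum (2 ^ N) (fun y => Cmul (A x y) (psi y)).
Definition outer (psi phi : ket) : Op := fun x y => Cmul (psi x) (Cconj (phi y)).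

Definition zsign (j x : nat) : R := if Nat.testbit x j then -1 else 1.
Definition Zop (j : nat) : Op := fun x y => if Nat.eqb x y then RtoC (zsign j x) else C0.
Definition vZ (N : nat) (v : rvec) : Op := Osum N (fun j => Oscale (RtoC (v j)) (Zop j)).
Definition Xall (N : nat) : Op := fun x y =>
  if forallb (fun j => negb (Bool.eqb (Nat.testbit x j) (Nat.testbit y j))) (seq 0 N)
  then C1 else C0.

Definition Ham (N : nat) (h : rvec) : Op := Oscale (RtoC (1/2)) (vZ N h).
(* L_j = sqrt(lambda_j) v_j . Z ; vs j is the j-th eigenvector *)
Definition Lop (N : nat) (lam : nat -> R) (vs : nat -> rvec) (j : nat) : Op :=
  Oscale (RtoC (sqrt (lam j))) (vZ N (vs j)).
Definition in_lindblad_span (N : nat) (lam : nat -> R) (vs : nat -> rvec) (S : Op) : Prop :=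
  exists (a : R) (b : nat -> R) (c : nat -> nat -> R),
    op_eq N S
      (Oadd (Oscale (RtoC a) Oid)
        (Oadd (Osum N (fun i => Oscale (RtoC (b i)) (Lop N lam vs i)))
              (Osum N (fun i => Osum N (fun j =>
                  Oscale (RtoC (c i j)) (Omul N (Lop N lam vs i) (Lop N lam vs j))))))).

Definition ket0L (N : nat) (theta : rvec) : ket := fun x =>
  cprod N (fun j => if Nat.testbit x j then mkC 0 (sin (theta j))
                    else mkC (cos (theta j)) 0).
Definition ket1L (N : nat) (theta : rvec) : ket := Oapp N (Xall N) (ket0L N theta).
Definition codeP (N : nat) (theta : rvec) : Op :=
  Oadd (outer (ket0L N theta) (ket0L N theta)) (outer (ket1L N theta) (ket1L N theta)).
Definition codeZL (N : nat) (theta : rvec) : Op :=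
  Oadd (outer (ket0L N theta) (ket0L N theta))
       (Oscale (RtoC (-1)) (outer (ket1L N theta) (ket1L N theta))).

(* Both code words are product states, so for an operator [D] that is diagonal in the
   computational basis and factors as a tensor product of one-qubit [diag(1, e_j)], the
   matrix elements [<a_L| D |b_L>] factor over the qubits.  A qubit on which [D] acts
   trivially contributes the one-qubit overlap of [|a>] and [|b>], which vanishes for
   [a <> b]; [I], [Z_k] and [Z_k Z_l] all leave some qubit untouched when [N >= 3], so the
   Hamiltonian and every element of the Lindblad span are diagonal on the code space.
   On the diagonal, [Z_k] contributes [+-cos (2 theta_k) = +-b_k], so [<a_L| v.Z |a_L>]
   is [+-v.b]; since [b = gamma p] lies in [ker C] it is orthogonal to every eigenvector
   with nonzero eigenvalue, which kills the [L_i], while [Z_k Z_l] gives [b_k b_l]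
   independently of [a].  Hence [PSP] is a multiple of [P], and [PHP = (h.b / 2) Z_L]
   with [h.b = gamma |p|^2] because [h - p] is orthogonal to [ker C].

   For optimality: a feasible [b] is orthogonal to [col C], hence lies in [ker C] (for
   [C] symmetric), which is the line through [p]; so [b.h = r |p|^2] with
   [|r| <= 1 / ||p||_oo]. *)

From Stdlib Require Import Reals Lra Lia Arith List Bool Ring FunctionalExtensionality.
Open Scope R_scope.

Lemma Cx_eq (a b : Cx) : re a = re b -> im a = im b -> a = b.
Proof. destruct a, b; simpl; intros -> ->; reflexivity. Qed.

Definition Copp (a : Cx) : Cx := mkC (- re a) (- im a).
Definition Csub (a b : Cx) : Cx := Cadd a (Copp b).

Lemma Cx_ring_theory : ring_theory C0 C1 Cadd Cmul Csub Copp (@eq Cx).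
Proof.
  constructor; intros; apply Cx_eq; destruct x; try destruct y; try destruct z;
    simpl; ring.
Qed.
Add Ring Cx_ring : Cx_ring_theory.

Ltac cx_ring := apply Cx_eq; simpl; ring.

Lemma RtoC_mul (a b : R) : RtoC (a * b) = Cmul (RtoC a) (RtoC b).
Proof. cx_ring. Qed.

Lemma Cconj_mul (a b : Cx) : Cconj (Cmul a b) = Cmul (Cconj a) (Cconj b).
Proof. cx_ring. Qed.

Lemma csum_ext n f g :
  (forall i, (i < n)%nat -> f i = g i) -> csum n f = csum n g.
Proof.
  induction n as [|n IH]; intros H; simpl; auto.
  rewrite IH, H by first [lia | intros; apply H; lia]; reflexivity.
Qed.

Lemma csum_add n f g :
  csum n (fun i => Cadd (f i) (g i)) = Cadd (csum n f) (csum n g).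
Proof. induction n; simpl; [cx_ring | rewrite IHn; ring]. Qed.

Lemma csum_mull n c f : csum n (fun i => Cmul c (f i)) = Cmul c (csum n f).
Proof. induction n; simpl; [cx_ring | rewrite IHn; ring]. Qed.

Lemma csum_mulr n c f : csum n (fun i => Cmul (f i) c) = Cmul (csum n f) c.
Proof. induction n; simpl; [cx_ring | rewrite IHn; ring]. Qed.

Lemma csum_eq0 n f : (forall i, (i < n)%nat -> f i = C0) -> csum n f = C0.
Proof.
  induction n as [|n IH]; intros H; simpl; auto.
  rewrite IH, H by first [lia | intros; apply H; lia]; cx_ring.
Qed.

Lemma csum_swap n m (f : nat -> nat -> Cx) :
  csum n (fun i => csum m (f i)) = csum m (fun j => csum n (fun i => f i j)).
Proof.
  induction n; simpl.
  - symmetry; apply csum_eq0; auto.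
  - rewrite IHn, <- csum_add; reflexivity.
Qed.

Lemma csum_RtoC n f : csum n (fun i => RtoC (f i)) = RtoC (rsum n f).
Proof. induction n; simpl; [reflexivity | rewrite IHn; cx_ring]. Qed.

Lemma csum_delta n x f :
  (x < n)%nat -> csum n (fun y => if Nat.eqb x y then f y else C0) = f x.
Proof.
  induction n as [|n IH]; intros Hx; simpl; [lia|].
  destruct (Nat.eqb_spec x n) as [->|Hne].
  - rewrite csum_eq0; [cx_ring|].
    intros i Hi; destruct (Nat.eqb_spec n i); [lia | reflexivity].
  - rewrite IH by lia; cx_ring.
Qed.

Lemma csum_double m f :
  csum (2 * m) f = csum m (fun y => Cadd (f (2 * y)%nat) (f (2 * y + 1)%nat)).
Proof.
  induction m as [|m IH]; [reflexivity|].
  replace (2 * S m)%nat with (S (S (2 * m))) by lia.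
  cbn [csum]; rewrite IH.
  replace (2 * m + 1)%nat with (S (2 * m)) by lia; ring.
Qed.

Lemma cprod_ext n f g :
  (forall i, (i < n)%nat -> f i = g i) -> cprod n f = cprod n g.
Proof.
  induction n as [|n IH]; intros H; simpl; auto.
  rewrite IH, H by first [lia | intros; apply H; lia]; reflexivity.
Qed.

Lemma cprod_mul n f g :
  cprod n (fun i => Cmul (f i) (g i)) = Cmul (cprod n f) (cprod n g).
Proof. induction n; simpl; [cx_ring | rewrite IHn; ring]. Qed.

Lemma cprod_shift n f :
  cprod (S n) f = Cmul (f O) (cprod n (fun j => f (S j))).
Proof.
  induction n; simpl; [ring|].
  simpl in IHn; rewrite IHn; ring.
Qed.

Lemma cprod_eq0 n f j : (j < n)%nat -> f j = C0 -> cprod n f = C0.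
Proof.
  induction n as [|n IH]; intros Hj H; simpl; [lia|].
  destruct (Nat.eq_dec j n) as [->|Hne];
    [rewrite H | rewrite IH by (assumption || lia)]; ring.
Qed.

Lemma cprod_eq1 n f : (forall j, (j < n)%nat -> f j = C1) -> cprod n f = C1.
Proof.
  induction n as [|n IH]; intros H; simpl; auto.
  rewrite IH, H by first [lia | intros; apply H; lia]; ring.
Qed.

Lemma cprod_delta n k f :
  (k < n)%nat -> cprod n (fun j => if Nat.eqb j k then f j else C1) = f k.
Proof.
  induction n as [|n IH]; intros Hk; simpl; [lia|].
  destruct (Nat.eqb_spec n k) as [->|Hne].
  - rewrite cprod_eq1; [ring|].
    intros j Hj; destruct (Nat.eqb_spec j k); [lia | reflexivity].
  - rewrite IH by lia; ring.
Qed.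

Lemma cprod_conj n f : Cconj (cprod n f) = cprod n (fun j => Cconj (f j)).
Proof. induction n; simpl; [cx_ring | rewrite Cconj_mul, IHn; reflexivity]. Qed.

Lemma rsum_ext n f g :
  (forall i, (i < n)%nat -> f i = g i) -> rsum n f = rsum n g.
Proof.
  induction n as [|n IH]; intros H; simpl; auto.
  rewrite IH, H by first [lia | intros; apply H; lia]; reflexivity.
Qed.

Lemma rsum_add n f g : rsum n (fun i => f i + g i) = rsum n f + rsum n g.
Proof. induction n; simpl; [ring | rewrite IHn; ring]. Qed.

Lemma rsum_scal n c f : rsum n (fun i => c * f i) = c * rsum n f.
Proof. induction n; simpl; [ring | rewrite IHn; ring]. Qed.

Lemma rsum_eq0 n f : (forall i, (i < n)%nat -> f i = 0) -> rsum n f = 0.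
Proof.
  induction n as [|n IH]; intros H; simpl; auto.
  rewrite IH, H by first [lia | intros; apply H; lia]; ring.
Qed.

Lemma rsum_swap n m (f : nat -> nat -> R) :
  rsum n (fun i => rsum m (f i)) = rsum m (fun j => rsum n (fun i => f i j)).
Proof.
  induction n; simpl.
  - symmetry; apply rsum_eq0; auto.
  - rewrite IHn, <- rsum_add; reflexivity.
Qed.

Lemma rsum_sq_nonneg n f : 0 <= rsum n (fun i => f i * f i).
Proof.
  induction n; simpl; [lra|].
  pose proof (Rle_0_sqr (f n)); unfold Rsqr in *; lra.
Qed.

Lemma rsum_sq_eq0 n f :
  rsum n (fun i => f i * f i) = 0 -> forall i, (i < n)%nat -> f i = 0.
Proof.
  induction n as [|n IH]; intros H i Hi; simpl in H; [lia|].
  pose proof (rsum_sq_nonneg n f).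
  pose proof (Rle_0_sqr (f n)); unfold Rsqr in *.
  destruct (Nat.eq_dec i n) as [->|Hne]; [nra | apply IH; [nra | lia]].
Qed.

Lemma csum_cprod_bits N (g : nat -> bool -> Cx) :
  csum (2 ^ N) (fun x => cprod N (fun j => g j (Nat.testbit x j)))
  = cprod N (fun j => Cadd (g j false) (g j true)).
Proof.
  revert g; induction N as [|N IH]; intros g; [cx_ring|].
  change (2 ^ S N)%nat with (2 * 2 ^ N)%nat.
  rewrite csum_double, cprod_shift, <- (IH (fun j => g (S j))), <- csum_mull.
  apply csum_ext; intros y _.
  rewrite !cprod_shift, Nat.testbit_even_0, Nat.testbit_odd_0.
  rewrite (cprod_ext _ (fun j => g (S j) (Nat.testbit (2 * y) (S j)))
                       (fun j => g (S j) (Nat.testbit y j))),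
          (cprod_ext _ (fun j => g (S j) (Nat.testbit (2 * y + 1) (S j)))
                       (fun j => g (S j) (Nat.testbit y j))).
  - ring.
  - intros; rewrite Nat.testbit_odd_succ by lia; reflexivity.
  - intros; rewrite Nat.testbit_even_succ by lia; reflexivity.
Qed.

Section Operators.

Variable N : nat.

Definition melem (u : ket) (A : Op) (v : ket) : Cx :=
  csum (2 ^ N) (fun x => csum (2 ^ N) (fun y =>
    Cmul (Cmul (Cconj (u x)) (A x y)) (v y))).

Definition inner (u v : ket) : Cx :=
  csum (2 ^ N) (fun x => Cmul (Cconj (u x)) (v x)).

Lemma melem_ext u v A B : op_eq N A B -> melem u A v = melem u B v.
Proof.
  intros HAB; apply csum_ext; intros x Hx; apply csum_ext; intros y Hy.
  rewrite HAB by assumption; reflexivity.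
Qed.

Lemma melem_Oadd u v A B : melem u (Oadd A B) v = Cadd (melem u A v) (melem u B v).
Proof.
  unfold melem, Oadd; rewrite <- csum_add; apply csum_ext; intros.
  rewrite <- csum_add; apply csum_ext; intros; ring.
Qed.

Lemma melem_Oscale u v c A : melem u (Oscale c A) v = Cmul c (melem u A v).
Proof.
  unfold melem, Oscale; rewrite <- csum_mull; apply csum_ext; intros.
  rewrite <- csum_mull; apply csum_ext; intros; ring.
Qed.

Lemma melem_Osum u v n F : melem u (Osum n F) v = csum n (fun i => melem u (F i) v).
Proof.
  unfold melem, Osum; symmetry.
  rewrite csum_swap; apply csum_ext; intros.
  rewrite csum_swap; apply csum_ext; intros.
  rewrite csum_mulr, csum_mull; reflexivity.
Qed.

Lemma melem_diag u v A d :
  (forall x y, (x < 2 ^ N)%nat -> (y < 2 ^ N)%nat ->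
     A x y = if Nat.eqb x y then d x else C0) ->
  melem u A v = csum (2 ^ N) (fun x => Cmul (Cmul (Cconj (u x)) (d x)) (v x)).
Proof.
  intros HA; apply csum_ext; intros x Hx.
  rewrite <- (csum_delta (2 ^ N) x (fun y => Cmul (Cmul (Cconj (u x)) (d x)) (v y)))
    by assumption.
  apply csum_ext; intros y Hy; rewrite HA by assumption.
  destruct (Nat.eqb_spec x y) as [->|]; ring.
Qed.

Lemma melem_Oid u v : melem u Oid v = inner u v.
Proof.
  rewrite (melem_diag _ _ _ (fun _ => C1)) by reflexivity.
  apply csum_ext; intros; ring.
Qed.

Lemma melem_outer u v w z : melem u (outer v w) z = Cmul (inner u v) (inner w z).
Proof.
  unfold melem, inner, outer; rewrite <- csum_mulr; apply csum_ext; intros.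
  rewrite <- csum_mull; apply csum_ext; intros; ring.
Qed.

Lemma Omul_Oadd_l A B D : Omul N (Oadd A B) D = Oadd (Omul N A D) (Omul N B D).
Proof.
  extensionality x; extensionality y; unfold Omul, Oadd.
  rewrite <- csum_add; apply csum_ext; intros; ring.
Qed.

Lemma Omul_Oadd_r A B D : Omul N A (Oadd B D) = Oadd (Omul N A B) (Omul N A D).
Proof.
  extensionality x; extensionality y; unfold Omul, Oadd.
  rewrite <- csum_add; apply csum_ext; intros; ring.
Qed.

Lemma Omul_Oscale_l c A B : Omul N (Oscale c A) B = Oscale c (Omul N A B).
Proof.
  extensionality x; extensionality y; unfold Omul, Oscale.
  rewrite <- csum_mull; apply csum_ext; intros; ring.
Qed.

Lemma Omul_Oscale_r c A B : Omul N A (Oscale c B) = Oscale c (Omul N A B).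
Proof.
  extensionality x; extensionality y; unfold Omul, Oscale.
  rewrite <- csum_mull; apply csum_ext; intros; ring.
Qed.

Lemma Omul_Osum_l n F B : Omul N (Osum n F) B = Osum n (fun i => Omul N (F i) B).
Proof.
  extensionality x; extensionality y; unfold Omul, Osum.
  rewrite <- csum_swap; apply csum_ext; intros; symmetry; apply csum_mulr.
Qed.

Lemma Omul_Osum_r n A F : Omul N A (Osum n F) = Osum n (fun i => Omul N A (F i)).
Proof.
  extensionality x; extensionality y; unfold Omul, Osum.
  rewrite <- csum_swap; apply csum_ext; intros; symmetry; apply csum_mull.
Qed.

Lemma outer_sandwich u u' S v v' :
  Omul N (outer u u') (Omul N S (outer v v')) = Oscale (melem u' S v) (outer u v').
Proof.
  extensionality x; extensionality y; unfold Omul, Oscale, outer, melem.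
  rewrite <- csum_mulr; apply csum_ext; intros.
  rewrite <- csum_mulr, <- csum_mull; apply csum_ext; intros; ring.
Qed.

End Operators.

Definition qubit (t : R) (b : bool) : Cx :=
  if b then mkC 0 (sin t) else mkC (cos t) 0.

Definition codeword (N : nat) (th : rvec) (a : bool) : ket :=
  fun x => cprod N (fun j => qubit (th j) (xorb a (Nat.testbit x j))).

Lemma ket0L_codeword N th : ket0L N th = codeword N th false.
Proof. reflexivity. Qed.

Lemma forallb_seq_cprod N (q : nat -> bool) :
  (if forallb q (seq 0 N) then C1 else C0) = cprod N (fun j => if q j then C1 else C0).
Proof.
  induction N as [|N IH]; [reflexivity|].
  rewrite seq_S, forallb_app; cbn [cprod]; rewrite <- IH; simpl.
  destruct (forallb q (seq 0 N)), (q N); cx_ring.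
Qed.

Lemma ket1L_codeword N th : ket1L N th = codeword N th true.
Proof.
  extensionality x; unfold ket1L, Oapp, Xall.
  rewrite (csum_ext _ _ (fun y => cprod N (fun j =>
     Cmul (if negb (Bool.eqb (Nat.testbit x j) (Nat.testbit y j)) then C1 else C0)
          (qubit (th j) (Nat.testbit y j))))).
  - rewrite (csum_cprod_bits N (fun j b =>
      Cmul (if negb (Bool.eqb (Nat.testbit x j) b) then C1 else C0) (qubit (th j) b))).
    apply cprod_ext; intros j _; destruct (Nat.testbit x j); cx_ring.
  - intros y _; rewrite forallb_seq_cprod; unfold ket0L; rewrite <- cprod_mul.
    reflexivity.
Qed.

Section TensorDiagonal.

Variable N : nat.

Definition weight (e : rvec) (x : nat) : Cx :=
  cprod N (fun j => if Nat.testbit x j then RtoC (e j) else C1).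

(* [A] is the tensor product of the one-qubit operators [diag(1, e j)]. *)
Definition tensor_diag (e : rvec) (A : Op) : Prop :=
  forall x y, (x < 2 ^ N)%nat -> (y < 2 ^ N)%nat ->
    A x y = if Nat.eqb x y then weight e x else C0.

Definition zpat (k j : nat) : R := if Nat.eqb j k then -1 else 1.

Lemma weight_zpat k x : (k < N)%nat -> weight (zpat k) x = RtoC (zsign k x).
Proof.
  intros Hk; unfold weight.
  rewrite (cprod_ext _ _ (fun j => if Nat.eqb j k then RtoC (zsign j x) else C1)).
  - apply cprod_delta, Hk.
  - intros j _; unfold zpat, zsign.
    destruct (Nat.eqb j k), (Nat.testbit x j); reflexivity.
Qed.

Lemma weight_mul e e' x :
  weight (fun j => e j * e' j) x = Cmul (weight e x) (weight e' x).
Proof.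
  unfold weight; rewrite <- cprod_mul; apply cprod_ext; intros j _.
  destruct (Nat.testbit x j); cx_ring.
Qed.

Lemma tensor_diag_Oid : tensor_diag (fun _ => 1) Oid.
Proof.
  intros x y _ _; unfold Oid, weight; rewrite cprod_eq1; [reflexivity|].
  intros j _; destruct (Nat.testbit x j); reflexivity.
Qed.

Lemma tensor_diag_Zop k : (k < N)%nat -> tensor_diag (zpat k) (Zop k).
Proof. intros Hk x y _ _; rewrite weight_zpat by exact Hk; reflexivity. Qed.

Lemma tensor_diag_ZZ k l :
  (k < N)%nat -> (l < N)%nat ->
  tensor_diag (fun j => zpat k j * zpat l j) (Omul N (Zop k) (Zop l)).
Proof.
  intros Hk Hl x y Hx _; unfold Omul.
  rewrite weight_mul, !weight_zpat by assumption.
  transitivity (csum (2 ^ N) (fun z =>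
    if Nat.eqb x z then Cmul (RtoC (zsign k x)) (Zop l z y) else C0)).
  - apply csum_ext; intros z _; unfold Zop at 1.
    destruct (Nat.eqb_spec x z) as [<-|]; [reflexivity | ring].
  - rewrite csum_delta by exact Hx; unfold Zop; destruct (Nat.eqb x y); ring.
Qed.

Lemma exists_index_avoiding k l :
  (3 <= N)%nat -> exists j, (j < N)%nat /\ j <> k /\ j <> l.
Proof.
  intros HN.
  destruct (Nat.eq_dec k 0), (Nat.eq_dec l 0), (Nat.eq_dec k 1), (Nat.eq_dec l 1);
    subst; try lia;
    solve [exists 0%nat; lia | exists 1%nat; lia | exists 2%nat; lia].
Qed.

End TensorDiagonal.

(* One-qubit factor [<a| diag(1, ej) |b>] of a code matrix element, where
   [|a> := qubit t a |0> + qubit t (negb a) |1>], so that [|1> = X |0>]. *)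
Definition qfactor (t ej : R) (a b : bool) : Cx :=
  Cadd (Cmul (Cconj (qubit t a)) (qubit t b))
       (Cmul (Cmul (Cconj (qubit t (negb a))) (RtoC ej)) (qubit t (negb b))).

Definition sgn (a : bool) : R := if a then -1 else 1.

Lemma qfactor_flip t a : qfactor t 1 a (negb a) = C0.
Proof. destruct a; cx_ring. Qed.

Lemma qfactor_same_one t a : qfactor t 1 a a = C1.
Proof.
  pose proof (sin2_cos2 t); unfold Rsqr in *.
  destruct a; apply Cx_eq; simpl; lra.
Qed.

Lemma qfactor_same_neg t a : qfactor t (-1) a a = RtoC (sgn a * cos (2 * t)).
Proof. rewrite cos_2a; destruct a; cx_ring. Qed.

Section Codewords.

Variables (N : nat) (th : rvec).

Notation cw := (codeword N th).

Lemma melem_codeword_tensor_diag e A a b :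
  tensor_diag N e A ->
  melem N (cw a) A (cw b) = cprod N (fun j => qfactor (th j) (e j) a b).
Proof.
  intros HA; rewrite (melem_diag _ _ _ _ (weight N e)) by exact HA.
  set (g j bit := Cmul (Cmul (Cconj (qubit (th j) (xorb a bit)))
                             (if bit then RtoC (e j) else C1))
                       (qubit (th j) (xorb b bit))).
  transitivity (csum (2 ^ N) (fun x => cprod N (fun j => g j (Nat.testbit x j)))).
  - apply csum_ext; intros x _; unfold codeword, weight.
    rewrite cprod_conj, <- !cprod_mul; apply cprod_ext; intros j _.
    unfold g; destruct (Nat.testbit x j); reflexivity.
  - rewrite csum_cprod_bits; apply cprod_ext; intros j _.
    unfold g, qfactor; destruct a, b; simpl; ring.
Qed.

Lemma inner_codeword a b :
  (1 <= N)%nat -> inner N (cw a) (cw b) = if Bool.eqb a b then C1 else C0.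
Proof.
  intros HN; rewrite <- melem_Oid, (melem_codeword_tensor_diag _ _ a b (tensor_diag_Oid N)).
  destruct a, b; simpl;
    solve [ apply cprod_eq1; intros; apply qfactor_same_one
          | apply (cprod_eq0 _ _ 0); [lia | apply qfactor_flip] ].
Qed.

Definition bloch_z (k : nat) : R := cos (2 * th k).

Definition bloch_zz (k l : nat) : R := if Nat.eqb k l then 1 else bloch_z k * bloch_z l.

Lemma qfactor_zpat k j a :
  qfactor (th j) (zpat k j) a a = if Nat.eqb j k then RtoC (sgn a * bloch_z j) else C1.
Proof.
  unfold zpat; destruct (Nat.eqb j k); [apply qfactor_same_neg | apply qfactor_same_one].
Qed.

Lemma melem_Zop_same k a :
  (k < N)%nat -> melem N (cw a) (Zop k) (cw a) = RtoC (sgn a * bloch_z k).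
Proof.
  intros Hk; rewrite (melem_codeword_tensor_diag _ _ _ _ (tensor_diag_Zop N k Hk)).
  rewrite (cprod_ext _ _ _ (fun j _ => qfactor_zpat k j a)).
  apply cprod_delta, Hk.
Qed.

Lemma melem_Zop_flip k a :
  (2 <= N)%nat -> (k < N)%nat -> melem N (cw a) (Zop k) (cw (negb a)) = C0.
Proof.
  intros HN Hk; rewrite (melem_codeword_tensor_diag _ _ _ _ (tensor_diag_Zop N k Hk)).
  set (j := if Nat.eqb k 0 then 1%nat else 0%nat).
  assert (Hj : (j < N)%nat /\ j <> k) by (unfold j; destruct (Nat.eqb_spec k 0); lia).
  apply (cprod_eq0 _ _ j); [apply Hj|].
  unfold zpat; destruct (Nat.eqb_spec j k); [lia | apply qfactor_flip].
Qed.

Lemma melem_ZZ_same k l a :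
  (k < N)%nat -> (l < N)%nat ->
  melem N (cw a) (Omul N (Zop k) (Zop l)) (cw a) = RtoC (bloch_zz k l).
Proof.
  intros Hk Hl; rewrite (melem_codeword_tensor_diag _ _ _ _ (tensor_diag_ZZ N k l Hk Hl)).
  unfold bloch_zz; destruct (Nat.eqb_spec k l) as [<-|Hkl].
  - apply cprod_eq1; intros j _.
    replace (zpat k j * zpat k j) with 1 by (unfold zpat; destruct (Nat.eqb j k); ring).
    apply qfactor_same_one.
  - rewrite (cprod_ext _ _ (fun j => Cmul (qfactor (th j) (zpat k j) a a)
                                          (qfactor (th j) (zpat l j) a a))).
    + rewrite cprod_mul, !(cprod_ext _ _ _ (fun j _ => qfactor_zpat _ j a)), !cprod_delta
        by assumption.
      destruct a; cx_ring.
    + intros j _; rewrite !qfactor_zpat; unfold zpat.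
      destruct (Nat.eqb_spec j k), (Nat.eqb_spec j l); subst; try lia;
        rewrite ?Rmult_1_l, ?Rmult_1_r, ?qfactor_same_neg, ?qfactor_same_one;
        unfold bloch_z; ring.
Qed.

Lemma melem_ZZ_flip k l a :
  (3 <= N)%nat -> (k < N)%nat -> (l < N)%nat ->
  melem N (cw a) (Omul N (Zop k) (Zop l)) (cw (negb a)) = C0.
Proof.
  intros HN Hk Hl.
  rewrite (melem_codeword_tensor_diag _ _ _ _ (tensor_diag_ZZ N k l Hk Hl)).
  destruct (exists_index_avoiding N k l HN) as [j [Hj [Hjk Hjl]]].
  apply (cprod_eq0 _ _ j Hj); unfold zpat.
  destruct (Nat.eqb_spec j k), (Nat.eqb_spec j l); try lia.
  rewrite Rmult_1_l; apply qfactor_flip.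
Qed.

End Codewords.

Lemma melem_vZ N u v w :
  melem N u (vZ N w) v = csum N (fun k => Cmul (RtoC (w k)) (melem N u (Zop k) v)).
Proof. unfold vZ; rewrite melem_Osum; apply csum_ext; intros; apply melem_Oscale. Qed.

Lemma melem_vZ_mul N u v w w' :
  melem N u (Omul N (vZ N w) (vZ N w')) v =
  csum N (fun k => csum N (fun l =>
    Cmul (RtoC (w k * w' l)) (melem N u (Omul N (Zop k) (Zop l)) v))).
Proof.
  unfold vZ; rewrite Omul_Osum_l, melem_Osum; apply csum_ext; intros k _.
  rewrite Omul_Oscale_l, melem_Oscale, Omul_Osum_r, melem_Osum, <- csum_mull.
  apply csum_ext; intros l _.
  rewrite Omul_Oscale_r, melem_Oscale, RtoC_mul; ring.
Qed.

Section CodeSpace.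

Variables (N : nat) (th : rvec).

Notation cw := (codeword N th).
Notation P := (codeP N th).

Lemma codeP_sandwich S :
  (forall a, melem N (cw a) S (cw (negb a)) = C0) ->
  Omul N P (Omul N S P) =
  Oadd (Oscale (melem N (cw false) S (cw false)) (outer (cw false) (cw false)))
       (Oscale (melem N (cw true) S (cw true)) (outer (cw true) (cw true))).
Proof.
  intros Hoff; pose proof (Hoff false) as H01; pose proof (Hoff true) as H10.
  simpl negb in H01, H10; unfold codeP; rewrite ket0L_codeword, ket1L_codeword.
  rewrite !Omul_Oadd_r, !Omul_Oadd_l, !outer_sandwich, H01, H10.
  extensionality x; extensionality y; unfold Oadd, Oscale; ring.
Qed.

Section Lindblad.

Variables (lam : nat -> R) (vs : nat -> rvec).

Lemma melem_Lop_same i a :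
  sqrt (lam i) * rsum N (fun k => vs i k * bloch_z th k) = 0 ->
  melem N (cw a) (Lop N lam vs i) (cw a) = C0.
Proof.
  intros Hi; unfold Lop; rewrite melem_Oscale, melem_vZ.
  rewrite (csum_ext _ _ (fun k => RtoC (sgn a * (vs i k * bloch_z th k)))),
    csum_RtoC, rsum_scal.
  - rewrite <- RtoC_mul, Rmult_comm, Rmult_assoc, (Rmult_comm _ (sqrt (lam i))), Hi.
    cx_ring.
  - intros k Hk; rewrite melem_Zop_same by exact Hk; cx_ring.
Qed.

Lemma melem_Lop_flip i a :
  (2 <= N)%nat -> melem N (cw a) (Lop N lam vs i) (cw (negb a)) = C0.
Proof.
  intros HN; unfold Lop; rewrite melem_Oscale, melem_vZ, csum_eq0; [cx_ring|].
  intros k Hk; rewrite melem_Zop_flip by assumption; cx_ring.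
Qed.

Definition lindblad_pair_value (i j : nat) : R :=
  sqrt (lam i) * sqrt (lam j) *
  rsum N (fun k => rsum N (fun l => vs i k * vs j l * bloch_zz th k l)).

Lemma melem_LLop_same i j a :
  melem N (cw a) (Omul N (Lop N lam vs i) (Lop N lam vs j)) (cw a)
  = RtoC (lindblad_pair_value i j).
Proof.
  unfold Lop; rewrite Omul_Oscale_l, Omul_Oscale_r, !melem_Oscale, melem_vZ_mul.
  rewrite (csum_ext _ _ (fun k =>
             RtoC (rsum N (fun l => vs i k * vs j l * bloch_zz th k l)))), csum_RtoC.
  - unfold lindblad_pair_value; cx_ring.
  - intros k Hk; rewrite <- csum_RtoC; apply csum_ext; intros l Hl.
    rewrite melem_ZZ_same by assumption; cx_ring.
Qed.

Lemma melem_LLop_flip i j a :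
  (3 <= N)%nat ->
  melem N (cw a) (Omul N (Lop N lam vs i) (Lop N lam vs j)) (cw (negb a)) = C0.
Proof.
  intros HN; unfold Lop; rewrite Omul_Oscale_l, Omul_Oscale_r, !melem_Oscale, melem_vZ_mul.
  rewrite csum_eq0; [cx_ring|]; intros k Hk; apply csum_eq0; intros l Hl.
  rewrite melem_ZZ_flip by assumption; cx_ring.
Qed.

Lemma melem_lindblad_span S :
  (3 <= N)%nat ->
  (forall i, (i < N)%nat -> sqrt (lam i) * rsum N (fun k => vs i k * bloch_z th k) = 0) ->
  in_lindblad_span N lam vs S ->
  exists c : R, forall a,
    melem N (cw a) S (cw a) = RtoC c /\ melem N (cw a) S (cw (negb a)) = C0.
Proof.
  intros HN Hlin [c0 [b [c HS]]].
  exists (c0 + rsum N (fun i => rsum N (fun j => c i j * lindblad_pair_value i j))).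
  intros a; rewrite !(melem_ext _ _ _ _ _ HS), !melem_Oadd, !melem_Oscale, !melem_Osum,
    !melem_Oid, !inner_codeword by lia.
  split.
  - rewrite eqb_reflx, csum_eq0.
    + rewrite (csum_ext _ _ (fun i =>
                 RtoC (rsum N (fun j => c i j * lindblad_pair_value i j)))), csum_RtoC;
        [cx_ring|].
      intros i _; rewrite melem_Osum, <- csum_RtoC; apply csum_ext; intros j _.
      rewrite melem_Oscale, melem_LLop_same; cx_ring.
    + intros i Hi; rewrite melem_Oscale, melem_Lop_same by (apply Hlin, Hi); cx_ring.
  - replace (Bool.eqb a (negb a)) with false by (destruct a; reflexivity).
    rewrite !csum_eq0; [cx_ring| |].
    + intros i _; rewrite melem_Osum; apply csum_eq0; intros j _.
      rewrite melem_Oscale, melem_LLop_flip by exact HN; cx_ring.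
    + intros i _; rewrite melem_Oscale, melem_Lop_flip by lia; cx_ring.
Qed.

Lemma codeP_compresses_lindblad_span S :
  (3 <= N)%nat ->
  (forall i, (i < N)%nat -> sqrt (lam i) * rsum N (fun k => vs i k * bloch_z th k) = 0) ->
  in_lindblad_span N lam vs S ->
  exists c : R, op_eq N (Omul N P (Omul N S P)) (Oscale (RtoC c) P).
Proof.
  intros HN Hlin HS; destruct (melem_lindblad_span S HN Hlin HS) as [c Hc].
  exists c; rewrite codeP_sandwich by (intros a; apply Hc).
  rewrite (proj1 (Hc false)), (proj1 (Hc true)).
  intros x y _ _; unfold codeP; rewrite ket0L_codeword, ket1L_codeword.
  unfold Oadd, Oscale; ring.
Qed.

End Lindblad.

Lemma melem_Ham_same h a :
  melem N (cw a) (Ham N h) (cw a)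
  = RtoC (sgn a * (1 / 2 * rsum N (fun k => h k * bloch_z th k))).
Proof.
  unfold Ham; rewrite melem_Oscale, melem_vZ.
  rewrite (csum_ext _ _ (fun k => RtoC (sgn a * (h k * bloch_z th k)))),
    csum_RtoC, rsum_scal.
  - cx_ring.
  - intros k Hk; rewrite melem_Zop_same by exact Hk; cx_ring.
Qed.

Lemma melem_Ham_flip h a : (2 <= N)%nat -> melem N (cw a) (Ham N h) (cw (negb a)) = C0.
Proof.
  intros HN; unfold Ham; rewrite melem_Oscale, melem_vZ, csum_eq0; [cx_ring|].
  intros k Hk; rewrite melem_Zop_flip by assumption; cx_ring.
Qed.

Lemma codeP_compresses_Ham h :
  (2 <= N)%nat ->
  Omul N P (Omul N (Ham N h) P) =
  Oscale (RtoC (1 / 2 * rsum N (fun k => h k * bloch_z th k))) (codeZL N th).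
Proof.
  intros HN; rewrite codeP_sandwich by (intros; apply melem_Ham_flip, HN).
  rewrite !melem_Ham_same; unfold codeZL; rewrite ket0L_codeword, ket1L_codeword.
  extensionality x; extensionality y; unfold Oadd, Oscale, sgn; cx_ring.
Qed.

Lemma codeZL_not_multiple_codeP m :
  (1 <= N)%nat -> m <> 0 ->
  ~ exists c, op_eq N (Oscale (RtoC m) (codeZL N th)) (Oscale c P).
Proof.
  intros HN Hm [c Hc].
  assert (Hdiag : forall a, melem N (cw a) (Oscale (RtoC m) (codeZL N th)) (cw a)
                            = melem N (cw a) (Oscale c P) (cw a))
    by (intros; apply melem_ext, Hc).
  pose proof (Hdiag false) as H0; pose proof (Hdiag true) as H1.
  unfold codeZL, codeP in H0, H1; rewrite ket0L_codeword, ket1L_codeword in H0, H1.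
  rewrite !melem_Oscale, !melem_Oadd, !melem_Oscale, !melem_outer, !inner_codeword
    in H0, H1 by exact HN.
  apply (f_equal re) in H0; apply (f_equal re) in H1; simpl in H0, H1; lra.
Qed.

End CodeSpace.

Section Vectors.

Variable N : nat.

Lemma dot_comm u v : dot N u v = dot N v u.
Proof. unfold dot; apply rsum_ext; intros; ring. Qed.

Lemma dot_scale_l c u v : dot N (fun j => c * u j) v = c * dot N u v.
Proof. unfold dot; rewrite <- rsum_scal; apply rsum_ext; intros; ring. Qed.

Lemma norm2sq_pos p : (exists j, (j < N)%nat /\ p j <> 0) -> 0 < norm2sq N p.
Proof.
  intros [j [Hj Hpj]].
  destruct (rsum_sq_nonneg N p) as [Hpos|Hzero]; [exact Hpos|].
  exfalso; apply Hpj, (rsum_sq_eq0 N p (eq_sym Hzero) j Hj).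
Qed.

Lemma infnorm_nonneg p : 0 <= infnorm N p.
Proof.
  unfold infnorm; induction (seq 0 N) as [|j l IH]; simpl; [lra|].
  pose proof (Rmax_r (Rabs (p j)) (fold_right Rmax 0 (map (fun j => Rabs (p j)) l))); lra.
Qed.

Lemma infnorm_ge p j : (j < N)%nat -> Rabs (p j) <= infnorm N p.
Proof.
  intros Hj; assert (Hin : In j (seq 0 N)) by (apply in_seq; lia).
  unfold infnorm; induction (seq 0 N) as [|i l IH]; simpl in *; [tauto|].
  destruct Hin as [->|Hin]; [apply Rmax_l|].
  eapply Rle_trans; [apply IH, Hin | apply Rmax_r].
Qed.

Lemma infnorm_pos_witness p : 0 < infnorm N p -> exists j, (j < N)%nat /\ p j <> 0.
Proof.
  unfold infnorm; intros Hpos.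
  cut (exists j, In j (seq 0 N) /\ 0 < Rabs (p j)).
  { intros [j [Hj Hpj]]; apply in_seq in Hj; exists j; split; [lia|].
    intros E; rewrite E, Rabs_R0 in Hpj; lra. }
  induction (seq 0 N) as [|i l IH]; simpl in *; [lra|].
  destruct (Rle_lt_dec (Rabs (p i)) (fold_right Rmax 0 (map (fun j => Rabs (p j)) l))).
  - rewrite Rmax_right in Hpos by assumption.
    destruct (IH Hpos) as [j [Hj Hpj]]; eauto.
  - exists i; split; [left; reflexivity | rewrite Rmax_left in Hpos; lra].
Qed.

Lemma infnorm_ext p q : (forall j, (j < N)%nat -> p j = q j) -> infnorm N p = infnorm N q.
Proof.
  intros Hpq; unfold infnorm; f_equal; apply map_ext_in; intros j Hj.
  apply in_seq in Hj; rewrite Hpq by lia; reflexivity.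
Qed.

Lemma infnorm_scale c p : infnorm N (fun j => c * p j) = Rabs c * infnorm N p.
Proof.
  unfold infnorm; induction (seq 0 N) as [|j l IH]; simpl; [ring|].
  rewrite IH, Rabs_mult, RmaxRmult by apply Rabs_pos; reflexivity.
Qed.

(* Rocq's [/ 0] is [0], so the hypothesis alone rules out [p = 0]. *)
Lemma infnorm_pos_of_inv_bound p gamma :
  0 < Rabs gamma <= / infnorm N p -> 0 < infnorm N p.
Proof.
  intros Hg; destruct (infnorm_nonneg p) as [Hpos|Hzero]; [exact Hpos|].
  rewrite <- Hzero, Rinv_0 in Hg; lra.
Qed.

Lemma scaled_entry_bound p gamma j :
  0 < infnorm N p -> Rabs gamma <= / infnorm N p -> (j < N)%nat ->
  -1 <= gamma * p j <= 1.
Proof.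
  intros Hg Hgamma Hj.
  assert (Habs : Rabs (gamma * p j) <= 1).
  { rewrite Rabs_mult, <- (Rinv_l (infnorm N p)) by lra.
    apply Rmult_le_compat; [apply Rabs_pos | apply Rabs_pos | exact Hgamma |].
    apply infnorm_ge, Hj. }
  pose proof (Rle_abs (gamma * p j)); pose proof (Rle_abs (- (gamma * p j))).
  rewrite Rabs_Ropp in *; lra.
Qed.

End Vectors.

Lemma cos_twice_half_acos x : -1 <= x <= 1 -> cos (2 * (acos x / 2)) = x.
Proof.
  intros Hx; replace (2 * (acos x / 2)) with (acos x) by field.
  apply cos_acos, Hx.
Qed.

Section KernelGeometry.

Variables (N : nat) (C : rmat).
Hypothesis C_sym : forall i j, (i < N)%nat -> (j < N)%nat -> C i j = C j i.

Lemma dot_matvec_sym x y : dot N x (matvec N C y) = dot N (matvec N C x) y.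
Proof.
  unfold dot, matvec.
  rewrite (rsum_ext _ _ (fun i => rsum N (fun j => x i * C i j * y j))).
  - rewrite rsum_swap; apply rsum_ext; intros j Hj.
    rewrite Rmult_comm, <- rsum_scal; apply rsum_ext; intros i Hi.
    rewrite (C_sym j i) by assumption; ring.
  - intros i _; rewrite <- rsum_scal; apply rsum_ext; intros; ring.
Qed.

Lemma dot_matvec_ker x p : in_ker N C p -> dot N (matvec N C x) p = 0.
Proof.
  intros Hp; rewrite <- dot_matvec_sym; unfold dot.
  apply rsum_eq0; intros i Hi; rewrite Hp by exact Hi; ring.
Qed.

Lemma in_ker_scale c p : in_ker N C p -> in_ker N C (fun j => c * p j).
Proof.
  intros Hp i Hi; unfold matvec.
  rewrite (rsum_ext _ _ (fun j => c * (C i j * p j))), rsum_scal by (intros; ring).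
  specialize (Hp i Hi); unfold matvec in Hp; rewrite Hp; ring.
Qed.

Lemma dot_ker_col b w : in_ker N C b -> in_col N C w -> dot N b w = 0.
Proof.
  intros Hb [y Hy].
  rewrite dot_comm; unfold dot; rewrite (rsum_ext _ _ (fun j => matvec N C y j * b j))
    by (intros j Hj; rewrite Hy by exact Hj; reflexivity).
  apply dot_matvec_ker, Hb.
Qed.

Lemma orth_col_in_ker b : (forall w, in_col N C w -> dot N b w = 0) -> in_ker N C b.
Proof.
  intros Hb; set (z := matvec N C b).
  assert (Hz : dot N z z = 0).
  { unfold z; rewrite <- dot_matvec_sym; apply Hb.
    exists z; reflexivity. }
  intros i Hi; apply (rsum_sq_eq0 N z Hz i Hi).
Qed.

Lemma sqrt_eigval_dot_ker v l p :
  (forall i, (i < N)%nat -> matvec N C v i = l * v i) -> in_ker N C p ->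
  sqrt l * dot N v p = 0.
Proof.
  intros Hv Hp.
  assert (Hl : l * dot N v p = 0).
  { rewrite <- dot_scale_l, <- (dot_matvec_ker v p Hp); unfold dot.
    apply rsum_ext; intros i Hi; rewrite Hv by exact Hi; reflexivity. }
  destruct (Req_dec l 0) as [->|Hl0]; [rewrite sqrt_0; ring|].
  apply Rmult_integral in Hl; destruct Hl as [Hl | ->]; [contradiction | ring].
Qed.

Lemma proj_dot_ker h p w :
  is_orth_proj_ker N C h p -> in_ker N C w -> dot N w h = dot N w p.
Proof.
  intros [_ Hproj] Hw; pose proof (Hproj w Hw) as E; unfold dot in *.
  rewrite (rsum_ext _ _ (fun j => w j * p j + (h j - p j) * w j)), rsum_add, E
    by (intros; ring).
  ring.
Qed.

Lemma ker_dim1_multiple p w :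
  ker_dim1 N C -> in_ker N C p -> (exists j, (j < N)%nat /\ p j <> 0) -> in_ker N C w ->
  exists r, forall j, (j < N)%nat -> w j = r * p j.
Proof.
  intros [u [_ [_ Hu]]] Hp [j0 [Hj0 Hpj0]] Hw.
  destruct (Hu p Hp) as [s Hs]; destruct (Hu w Hw) as [t Ht].
  assert (Hs0 : s <> 0) by (intros ->; apply Hpj0; rewrite Hs by exact Hj0; ring).
  exists (t / s); intros j Hj; rewrite Ht, Hs by exact Hj; field; exact Hs0.
Qed.

Lemma optimal_normalized_proj h p :
  ker_dim1 N C -> is_orth_proj_ker N C h p -> 0 < infnorm N p ->
  optimal N C h (fun j => / infnorm N p * p j).
Proof.
  intros Hdim Hproj Hg; pose proof (proj1 Hproj) as Hp.
  set (g := infnorm N p) in *.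
  pose proof (infnorm_pos_witness N p Hg) as Hnz.
  assert (Hbker : in_ker N C (fun j => / g * p j)) by (apply in_ker_scale, Hp).
  split; [split|].
  - rewrite infnorm_scale, Rabs_right by (apply Rle_ge, Rlt_le, Rinv_0_lt_compat, Hg).
    fold g; rewrite Rinv_l by lra; lra.
  - intros w Hw; apply dot_ker_col; assumption.
  - intros b [Hb Hbcol]; pose proof (orth_col_in_ker b Hbcol) as Hbk.
    destruct (ker_dim1_multiple p b Hdim Hp Hnz Hbk) as [r Hr].
    assert (Hrg : Rabs r * g <= 1)
      by (rewrite (infnorm_ext N _ _ Hr), infnorm_scale in Hb; exact Hb).
    assert (Hr_le : r <= / g).
    { apply (Rmult_le_reg_r g); [exact Hg|]; rewrite Rinv_l by lra.
      pose proof (Rle_abs r); nra. }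
    rewrite !proj_dot_ker with (h := h) (p := p) by assumption.
    unfold dot; rewrite (rsum_ext _ _ (fun j => r * (p j * p j)))
      by (intros j Hj; rewrite (Hr j Hj); ring).
    rewrite rsum_scal.
    replace (rsum N (fun j => / g * p j * p j)) with (/ g * rsum N (fun j => p j * p j))
      by (rewrite <- rsum_scal; apply rsum_ext; intros; ring).
    apply Rmult_le_compat_r; [apply rsum_sq_nonneg | exact Hr_le].
Qed.

End KernelGeometry.

Theorem mainTheorem6 :
  forall (N : nat) (h : rvec) (C : rmat) (vs : nat -> rvec) (lam : nat -> R)
         (p : rvec) (gamma : R),
  (3 <= N)%nat ->
  (forall i j, (i < N)%nat -> (j < N)%nat -> C i j = C j i) ->
  (forall x : rvec, 0 <= dot N x (matvec N C x)) ->
  (forall i j, (i < N)%nat -> (j < N)%nat ->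
     dot N (vs i) (vs j) = if Nat.eqb i j then 1 else 0) ->
  (forall k i, (k < N)%nat -> (i < N)%nat -> matvec N C (vs k) i = lam k * vs k i) ->
  (forall k, (k < N)%nat -> 0 <= lam k) ->
  ~ in_col N C h ->
  is_orth_proj_ker N C h p ->
  0 < Rabs gamma <= / infnorm N p ->
  let bt : rvec := fun j => gamma * p j in
  let theta : rvec := fun j => acos (bt j) / 2 in
  let P := codeP N theta in
  let PHP := Omul N P (Omul N (Ham N h) P) in
  (forall S : Op, in_lindblad_span N lam vs S ->
     exists c : R, op_eq N (Omul N P (Omul N S P)) (Oscale (RtoC c) P)) /\
  op_eq N PHP (Oscale (RtoC (gamma / 2 * norm2sq N p)) (codeZL N theta)) /\
  ~ (exists c : Cx, op_eq N PHP (Oscale c P)) /\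
  (ker_dim1 N C -> gamma = / infnorm N p -> optimal N C h bt).
Proof.
  intros N h C vs lam p gamma HN Hsym _ _ Heig _ _ Hproj Hgamma bt theta P PHP.
  pose proof (infnorm_pos_of_inv_bound N p gamma Hgamma) as Hg.
  assert (Hz : forall k, (k < N)%nat -> bloch_z theta k = gamma * p k).
  { intros k Hk; apply cos_twice_half_acos, (scaled_entry_bound N p gamma k);
      [exact Hg | apply Hgamma | exact Hk]. }
  assert (Hdot : forall w, rsum N (fun k => w k * bloch_z theta k) = gamma * dot N w p).
  { intros w; unfold dot; rewrite <- rsum_scal; apply rsum_ext.
    intros k Hk; rewrite (Hz k Hk); ring. }
  assert (HPHP : PHP = Oscale (RtoC (gamma / 2 * norm2sq N p)) (codeZL N theta)).
  { unfold PHP, P; rewrite codeP_compresses_Ham, Hdot, dot_comm by lia.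
    rewrite (proj_dot_ker N C h p p Hproj (proj1 Hproj)).
    f_equal; f_equal; unfold norm2sq; field. }
  split; [|split; [|split]].
  - intros S HS.
    apply (codeP_compresses_lindblad_span N theta lam vs S); [lia | | exact HS].
    intros i Hi; rewrite Hdot.
    transitivity (gamma * (sqrt (lam i) * dot N (vs i) p)); [ring|].
    rewrite (sqrt_eigval_dot_ker N C Hsym (vs i) (lam i) p
               (fun j Hj => Heig i j Hi Hj) (proj1 Hproj)); ring.
  - rewrite HPHP; intros x y _ _; reflexivity.
  - rewrite HPHP; apply codeZL_not_multiple_codeP; [lia|].
    pose proof (norm2sq_pos N p (infnorm_pos_witness N p Hg)).
    assert (Hg0 : gamma <> 0) by (intros ->; rewrite Rabs_R0 in Hgamma; lra).
    apply Rmult_integral_contrapositive_currified; [intros E; apply Hg0 | ]; lra.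
  - intros Hdim Hgam; unfold bt; rewrite Hgam.
    apply optimal_normalized_proj; assumption.
Qed.
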